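(* Let $H=B(1,3,3)$ and $G=H^2$. Then $G$ is equitably $4$-choosable.
   Context: For $m,l_1,\ldots,l_m\in\mathbb{N}$ with $l_1\le\cdots\le l_m$, $B(l_1,\ldots,l_m)$ is the graph with vertex set $\{u\}\cup\{v_{i,j}: i\in[m], j\in[l_i]\}$ in which, for each $i\in[m]$, consecutive vertices in the sequence $u, v_{i,1},\ldots,v_{i,l_i}$ are adjacent (and there are no other edges). For a graph $H$, $H^2$ has vertex set $V(H)$ with two vertices adjacent iff their distance in $H$ is 1 or 2. A $k$-assignment $L$ assigns to each vertex a set of exactly $k$ colors; an equitable $L$-coloring of $G$ is a proper coloring $f$ with $f(v)\in L(v)$ such that no color is used more than $\lceil |V(G)|/k\rceil$ times; $G$ is equitably $k$-choosable if it has an equitable $L$-coloring for every $k$-assignment $L$. *)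

From mathcomp Require Import all_boot.
Set Implicit Arguments. Unset Strict Implicit. Unset Printing Implicit Defensive.

(* Vertices of B(l_1,...,l_m), with l = [:: l_1; ...; l_m]:
   None = u, Some (Tagged i j) = v_{i+1, j+1} (0-based indices i, j). *)
Definition Bvert (l : seq nat) : finType :=
  option {i : 'I_(size l) & 'I_(nth 0 l i)}.

Definition Bedge (l : seq nat) : rel (Bvert l) := fun x y =>
  match x, y with
  | None, None => false
  | None, Some q => val (tagged q) == 0
  | Some p, None => val (tagged p) == 0
  | Some p, Some q =>
      (tag p == tag q) &&
      (((val (tagged p)).+1 == val (tagged q)) ||
       ((val (tagged q)).+1 == val (tagged p)))
  end.

Definition sqgraph (V : finType) (e : rel V) : rel V := fun x y =>
  (x != y) && (e x y || [exists z, e x z && e z y]).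

Definition ceil_div (n k : nat) : nat := n %/ k + (n %% k != 0).

Definition k_assignment (V : finType) (C : eqType) (L : V -> seq C) (k : nat) :=
  forall v, uniq (L v) /\ size (L v) = k.

Definition equitable_L_coloring (V : finType) (e : rel V) (C : eqType)
    (L : V -> seq C) (k : nat) (f : V -> C) :=
  (forall x y, e x y -> f x != f y) /\
  (forall v, f v \in L v) /\
  (forall c : C, #|[set v | f v == c]| <= ceil_div #|V| k).

Definition equitably_k_choosable (V : finType) (e : rel V) (k : nat) :=
  forall (C : eqType) (L : V -> seq C),
    k_assignment L k -> exists f : V -> C, equitable_L_coloring e L k f.

From mathcomp Require Import all_boot.
Set Implicit Arguments. Unset Strict Implicit. Unset Printing Implicit Defensive.

(* Number the eight vertices of H = B(1,3,3) as 0 = u, 1 = a = v_{1,1},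
   2,3,4 = b_1,b_2,b_3 (second branch) and 5,6,7 = c_1,c_2,c_3 (third branch).
   The square G has fourteen edges: the clique {u,a,b_1,c_1}, the triangles
   {b_1,b_2,b_3} and {c_1,c_2,c_3}, and u b_2, u c_2.  Add the three edges
   a b_2, a b_3, b_3 c_3 to obtain a supergraph G+ of G such that
   - in the order 0,...,7 every vertex has at most 3 earlier G+-neighbours, so
     colouring greedily from lists of size 4 yields a proper L-colouring of G+;
   - G+ has no independent set of three vertices, so every colour class of a
     proper colouring of G+ has at most 2 = ceil(8/4) vertices.
   Such a colouring is therefore an equitable L-colouring of G. *)

Lemma avoid_color (C : eqType) (s F : seq C) :
  uniq s -> size F < size s -> exists2 x, x \in s & x \notin F.
Proof.
move=> uniq_s small_F; apply/hasP; apply: contraLR small_F => /hasPn s_sub_F.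
by rewrite -leqNgt; apply: uniq_leq_size => // x /s_sub_F /negPn.
Qed.

Section Greedy.
Variables (C : eqType) (e : rel nat) (L : nat -> seq C) (n k : nat).
Hypothesis L_uniq : forall i, i < n -> uniq (L i) /\ size (L i) = k.
Hypothesis back_degree : forall j, j < n -> count (e^~ j) (iota 0 j) < k.

Lemma greedy_prefix (c0 : C) m : m <= n -> exists2 col : nat -> C,
  (forall i, i < m -> col i \in L i) &
  (forall i j, i < j < m -> e i j -> col i != col j).
Proof.
elim: m => [_|m IHm lt_m_n]; first by exists (fun=> c0) => // i j /andP[].
have [col col_in col_ok] := IHm (ltnW lt_m_n).
pose used := [seq col i | i <- iota 0 m & e i m].
have [|x x_in x_new] := avoid_color (F := used) (L_uniq lt_m_n).1.
  by rewrite size_map size_filter (L_uniq lt_m_n).2 back_degree.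
exists (fun i => if i == m then x else col i) => [i | i j].
  by rewrite ltnS leq_eqVlt; case: eqP => [-> | _ /= /col_in].
rewrite ltnS => /andP[lt_ij le_jm] e_ij; have ne_im : i != m.
  by rewrite neq_ltn (leq_trans lt_ij le_jm).
rewrite (negPf ne_im); have [def_j | ne_jm] := eqVneq j m.
  apply: contraNneq x_new => <-; apply/mapP; exists i => //.
  by rewrite mem_filter -def_j e_ij mem_iota add0n lt_ij.
by apply: col_ok e_ij; rewrite lt_ij ltn_neqAle ne_jm le_jm.
Qed.

Hypothesis e_sym : symmetric e.
Hypothesis e_irr : irreflexive e.

Lemma greedy_coloring : 0 < n -> exists2 col : nat -> C,
  (forall i, i < n -> col i \in L i) &
  (forall i j, i < n -> j < n -> e i j -> col i != col j).
Proof.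
move=> n_gt0; have [L0_uniq L0_size] := L_uniq n_gt0.
have [|c0 _ _] := avoid_color (F := [::]) L0_uniq.
  by rewrite L0_size; exact: back_degree n_gt0.
have [col col_in col_ok] := greedy_prefix c0 (leqnn n).
exists col => // i j lt_in lt_jn e_ij.
have [lt_ij | lt_ji | eq_ij] := ltngtP i j.
- by apply: col_ok; rewrite ?lt_ij.
- by rewrite eq_sym; apply: col_ok; rewrite ?lt_ji // e_sym.
- by rewrite eq_ij e_irr in e_ij.
Qed.
End Greedy.

(* In a graph on 0,...,n-1 with no independent set of three vertices, every
   colour class of a proper colouring has at most two elements: the first
   three members of a larger class would be pairwise non-adjacent. *)
Lemma class_size_le2 (C : eqType) (e : rel nat) (col : nat -> C) (n : nat) (c : C) :
  (forall i j, i < n -> j < n -> e i j -> col i != col j) ->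
  (forall i j k, i < j -> j < k -> k < n -> [|| e i j, e i k | e j k]) ->
  count (fun i => col i == c) (iota 0 n) <= 2.
Proof.
move=> col_ok no_indep3; rewrite -size_filter.
set S := filter _ _.
have S_sorted : sorted ltn S.
  by apply: sorted_filter; [exact: ltn_trans | exact: iota_ltn_sorted].
have S_mem i : i \in S -> i < n /\ col i = c.
  by rewrite mem_filter mem_iota => /andP[/eqP-> /andP[_ lt_in]].
case: S S_sorted S_mem => [|i [|j [|k S]]] //= /and3P[lt_ij lt_jk _] S_mem.
have [lt_in ci] := S_mem i (mem_head _ _).
have [lt_jn cj] : j < n /\ col j = c by apply: S_mem; rewrite !inE eqxx orbT.
have [lt_kn ck] : k < n /\ col k = c by apply: S_mem; rewrite !inE eqxx !orbT.
have := no_indep3 i j k lt_ij lt_jk lt_kn.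
case/or3P => [e_ij | e_ik | e_jk].
- by have := col_ok i j lt_in lt_jn e_ij; rewrite ci cj eqxx.
- by have := col_ok i k lt_in lt_kn e_ik; rewrite ci ck eqxx.
- by have := col_ok j k lt_jn lt_kn e_jk; rewrite cj ck eqxx.
Qed.

Lemma card_class_le (V : finType) (code : V -> nat) (P : pred nat) (n : nat) :
  injective code -> (forall v, code v < n) ->
  #|[set v | P (code v)]| <= count P (iota 0 n).
Proof.
move=> code_inj code_lt; rewrite -size_filter cardE -(size_map code).
apply: uniq_leq_size; first by rewrite map_inj_uniq ?enum_uniq.
move=> _ /mapP[v + ->]; rewrite mem_enum inE => Pv.
by rewrite mem_filter Pv mem_iota code_lt.
Qed.

Lemma all_iotaP (P : pred nat) (n : nat) :
  all P (iota 0 n) -> forall i, i < n -> P i.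
Proof. by move=> /allP all_P i lt_in; apply: all_P; rewrite mem_iota. Qed.

Notation B133 := [:: 1; 3; 3].
Notation V := (Bvert B133).

Definition branch_vertex (i : 'I_3) (j : nat) (lt_j : j < nth 0 B133 i) : V :=
  Some (Tagged (fun i : 'I_(size B133) => 'I_(nth 0 B133 i)) (Ordinal lt_j)).

Definition vertex_list : seq V :=
  [:: None;
      @branch_vertex (@Ordinal 3 0 isT) 0 isT;
      @branch_vertex (@Ordinal 3 1 isT) 0 isT;
      @branch_vertex (@Ordinal 3 1 isT) 1 isT;
      @branch_vertex (@Ordinal 3 1 isT) 2 isT;
      @branch_vertex (@Ordinal 3 2 isT) 0 isT;
      @branch_vertex (@Ordinal 3 2 isT) 1 isT;
      @branch_vertex (@Ordinal 3 2 isT) 2 isT].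

Definition vtx (k : nat) : V := nth None vertex_list k.

Definition num (v : V) : nat :=
  if v is Some p then
    let i := val (tag p) in let j := val (tagged p) in
    if i == 0 then 1 else if i == 1 then 2 + j else 5 + j
  else 0.

Lemma numK : cancel num vtx.
Proof.
case=> [[[i lt_i] [j lt_j]]|] //.
case: i lt_i lt_j => [|[|[|i]]] lt_i lt_j //; rewrite (eq_irrelevance lt_i isT) in lt_j *;
  by case: j lt_j => [|[|[|j]]] lt_j //; rewrite (eq_irrelevance lt_j isT).
Qed.

Lemma num_lt (v : V) : num v < 8.
Proof. by case: v => [[[[|[|[|i]]] lt_i] [[|[|[|j]]] lt_j]]|]. Qed.

Lemma card_V : #|V| = 8.
Proof.
have all_in v : v \in vertex_list by rewrite -(numK v) mem_nth ?num_lt.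
have uniq_list : uniq vertex_list by apply: (@map_uniq _ _ num).
rewrite -[8]/(size vertex_list) -(card_uniqP uniq_list).
by apply: eq_card => v; rewrite all_in.
Qed.

Definition sym_rel (E : seq (nat * nat)) : rel nat :=
  fun i j => ((i, j) \in E) || ((j, i) \in E).

Definition square_edges : seq (nat * nat) :=
  [:: (0, 1); (0, 2); (0, 5); (1, 2); (1, 5); (2, 5); (0, 3); (0, 6);
      (2, 3); (2, 4); (3, 4); (5, 6); (5, 7); (6, 7)].

Definition extra_edges : seq (nat * nat) := [:: (1, 3); (1, 4); (4, 7)].

Definition G8 : rel nat := sym_rel square_edges.
Definition G8plus : rel nat := sym_rel (extra_edges ++ square_edges).

Definition tree8 : rel nat := fun i j => Bedge (vtx i) (vtx j).

Lemma square_table :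
  all (fun i => all (fun j =>
    (i != j) && (tree8 i j || has (fun z => tree8 i z && tree8 z j) (iota 0 8))
    ==> G8 i j) (iota 0 8)) (iota 0 8).
Proof. by vm_compute. Qed.

Lemma sq_num (x y : V) : sqgraph (@Bedge B133) x y -> G8 (num x) (num y).
Proof.
case/andP => ne_xy adj_xy.
move: (all_iotaP square_table (num_lt x)) => /all_iotaP /(_ _ (num_lt y)) /implyP; apply.
rewrite /tree8 !numK (inj_eq (can_inj numK)) ne_xy andTb.
case/orP: adj_xy => [-> // | /existsP[z /andP[xz zy]]].
by apply/orP; right; apply/hasP; exists (num z); rewrite ?mem_iota ?num_lt //= !numK xz zy.
Qed.

Lemma G8_sub i j : G8 i j -> G8plus i j.
Proof. by rewrite /G8plus /G8 /sym_rel !mem_cat => /orP[] ->; rewrite ?orbT. Qed.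

Lemma G8plus_sym : symmetric G8plus.
Proof. by move=> i j; rewrite /G8plus /sym_rel orbC. Qed.

Lemma G8plus_irr : irreflexive G8plus.
Proof.
have loopless : all (fun p : nat * nat => p.1 != p.2) (extra_edges ++ square_edges) by [].
by move=> i; rewrite /G8plus /sym_rel orbb; apply/negP => /(allP loopless); rewrite /= eqxx.
Qed.

Lemma G8plus_back_degree j : j < 8 -> count (G8plus^~ j) (iota 0 j) < 4.
Proof.
by apply: (@all_iotaP (fun j => count (G8plus^~ j) (iota 0 j) < 4)); vm_compute.
Qed.

Lemma G8plus_no_indep3 i j k :
  i < j -> j < k -> k < 8 -> [|| G8plus i j, G8plus i k | G8plus j k].
Proof.
have table : all (fun k => all (fun j => all (fun i =>
  (i < j < k) ==> [|| G8plus i j, G8plus i k | G8plus j k]) (iota 0 8)) (iota 0 8)) (iota 0 8).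
  by vm_compute.
move=> lt_ij lt_jk lt_k8; have lt_j8 := ltn_trans lt_jk lt_k8.
move: (all_iotaP table lt_k8) => /all_iotaP /(_ _ lt_j8).
move=> /all_iotaP /(_ _ (ltn_trans lt_ij lt_j8)).
by rewrite lt_ij lt_jk.
Qed.

Theorem lemma2p7 :
  equitably_k_choosable (sqgraph (@Bedge [:: 1; 3; 3])) 4.
Proof.
move=> C L L_ok.
have [//|col col_in col_ok] := @greedy_coloring C G8plus (L \o vtx) 8 4
  (fun i _ => L_ok (vtx i)) G8plus_back_degree G8plus_sym G8plus_irr.
exists (col \o num); split; [|split].
- by move=> x y /sq_num /G8_sub; apply: col_ok; apply: num_lt.
- by move=> v; have := col_in _ (num_lt v); rewrite /= numK.
- move=> c; rewrite card_V.
  apply: leq_trans (card_class_le (fun i => col i == c) (can_inj numK) num_lt) _.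
  exact: class_size_le2 col_ok G8plus_no_indep3.
Qed.
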